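(* Let $(G,\cdot,\odot,H,\circ,\boxdot,N,\star)$ be a two-sided bracoid (so $(N,\star)$ is abelian). Then for all $g\in G$, $h\in H$ and $\eta\in N$: (1) $\alpha(g)$ is an endomorphism of $(N,\star)$; (2) $\beta(h)$ is an endomorphism of $(N,\star)$; (3) $({}^{\gamma(g)}\eta)^{\delta(h)}={}^{\gamma(g)}(\eta^{\delta(h)})$; (4) $({}^{\alpha(g)}\eta)^{\beta(h)}={}^{\alpha(g)}(\eta^{\beta(h)})$.
   Context: For a group $(N,\star)$, $e_N$ denotes its identity and $\overline{\eta}$ the inverse of $\eta$. A left skew bracoid is $(G,\cdot,N,\star,\odot)$ with $(G,\cdot),(N,\star)$ groups and $\odot$ a transitive left action of $G$ on $N$ with $g\odot(\mu\star\eta)=(g\odot\mu)\star\overline{(g\odot e_N)}\star(g\odot\eta)$ for all $g\in G$, $\mu,\eta\in N$. A right skew bracoid is $(H,\circ,N,\star,\boxdot)$ with $(H,\circ),(N,\star)$ groups and $\boxdot$ a transitive right action of $H$ on $N$ with $(\eta\star\mu)\boxdot h=(\eta\boxdot h)\star\overline{(e_N\boxdot h)}\star(\mu\boxdot h)$ for all $h\in H$, $\eta,\mu\in N$. A two-sided skew bracoid $(G,\cdot,\odot,H,\circ,\boxdot,N,\star)$ consists of a left skew bracoid $(G,\cdot,N,\star,\odot)$ and a right skew bracoid $(H,\circ,N,\star,\boxdot)$ on the same group $(N,\star)$ such that $g\odot(\eta\boxdot h)=(g\odot\eta)\boxdot h$ for all $g\in G,h\in H,\eta\in N$; it is a two-sided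 bracoid if $(N,\star)$ is abelian. Define, for $g\in G$, $h\in H$, $\eta\in N$: ${}^{\gamma(g)}\eta=\overline{(g\odot e_N)}\star(g\odot\eta)$; ${}^{\alpha(g)}\eta=\overline{(g\odot e_N)}\star(g\odot\eta)\star\overline{\eta}$; $\eta^{\delta(h)}=(\eta\boxdot h)\star\overline{(e_N\boxdot h)}$; $\eta^{\beta(h)}=\overline{\eta}\star(\eta\boxdot h)\star\overline{(e_N\boxdot h)}$. *)

Set Implicit Arguments.

Record Group := {
  carrier :> Type;
  op : carrier -> carrier -> carrier;
  e : carrier;
  inv : carrier -> carrier;
  op_assoc : forall x y z, op x (op y z) = op (op x y) z;
  op_e_l : forall x, op e x = x;
  op_e_r : forall x, op x e = x;
  op_inv_l : forall x, op (inv x) x = e;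
  op_inv_r : forall x, op x (inv x) = e
}.

Definition abelian (N : Group) : Prop := forall x y : N, op N x y = op N y x.

Definition is_transitive_left_action (G N : Group) (act : G -> N -> N) : Prop :=
  (forall x : N, act (e G) x = x) /\
  (forall (g1 g2 : G) (x : N), act (op G g1 g2) x = act g1 (act g2 x)) /\
  (forall x y : N, exists g : G, act g x = y).

Definition is_transitive_right_action (H N : Group) (act : N -> H -> N) : Prop :=
  (forall x : N, act x (e H) = x) /\
  (forall (h1 h2 : H) (x : N), act x (op H h1 h2) = act (act x h1) h2) /\
  (forall x y : N, exists h : H, act x h = y).

Definition left_skew_bracoid (G N : Group) (odot : G -> N -> N) : Prop :=
  is_transitive_left_action G N odot /\
  forall (g : G) (mu eta : N),
    odot g (op N mu eta) =
      op N (op N (odot g mu) (inv N (odot g (e N)))) (odot g eta).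

Definition right_skew_bracoid (H N : Group) (boxdot : N -> H -> N) : Prop :=
  is_transitive_right_action H N boxdot /\
  forall (h : H) (eta mu : N),
    boxdot (op N eta mu) h =
      op N (op N (boxdot eta h) (inv N (boxdot (e N) h))) (boxdot mu h).

Definition two_sided_skew_bracoid (G H N : Group)
  (odot : G -> N -> N) (boxdot : N -> H -> N) : Prop :=
  left_skew_bracoid G N odot /\ right_skew_bracoid H N boxdot /\
  forall (g : G) (h : H) (eta : N), odot g (boxdot eta h) = boxdot (odot g eta) h.

Definition two_sided_bracoid (G H N : Group)
  (odot : G -> N -> N) (boxdot : N -> H -> N) : Prop :=
  two_sided_skew_bracoid G H N odot boxdot /\ abelian N.

Definition gammaM (G N : Group) (odot : G -> N -> N) (g : G) (eta : N) : N :=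
  op N (inv N (odot g (e N))) (odot g eta).
Definition alphaM (G N : Group) (odot : G -> N -> N) (g : G) (eta : N) : N :=
  op N (op N (inv N (odot g (e N))) (odot g eta)) (inv N eta).
Definition deltaM (H N : Group) (boxdot : N -> H -> N) (h : H) (eta : N) : N :=
  op N (boxdot eta h) (inv N (boxdot (e N) h)).
Definition betaM (H N : Group) (boxdot : N -> H -> N) (h : H) (eta : N) : N :=
  op N (op N (inv N eta) (boxdot eta h)) (inv N (boxdot (e N) h)).

Definition is_endomorphism (N : Group) (f : N -> N) : Prop :=
  forall x y : N, f (op N x y) = op N (f x) (f y).

(* Write N multiplicatively, a := g ⊙ 1 and b := 1 ⊡ h.  The bracoid axioms say
   exactly that gamma(g) and delta(h) are endomorphisms, and that the actions are
   affine maps with these linear parts: g ⊙ x = a * gamma(g) x and, N being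
   abelian, x ⊡ h = b * delta(h) x.  Commuting affine maps have commuting linear
   parts, which is (3).  In an abelian group x |-> f x * x^-1 is an endomorphism
   whenever f is, and these maps commute when the f's do; as
   alpha(g) x = gamma(g) x * x^-1 and beta(h) x = delta(h) x * x^-1, this gives
   (1), (2) and (4). *)

From Stdlib Require Import ssreflect.

Set Implicit Arguments.

Section GroupLaws.

Variable N : Group.

Local Notation "x * y" := (op N x y).
Local Notation "x ^-1" := (inv N x) (at level 2, left associativity, format "x ^-1").
Local Notation "1" := (e N).

Lemma mulKg (x y : N) : x^-1 * (x * y) = y.
Proof. by rewrite op_assoc op_inv_l op_e_l. Qed.

Lemma mulgK (x y : N) : y * x^-1 * x = y.
Proof. by rewrite -op_assoc op_inv_l op_e_r. Qed.

Lemma mulgI (x y z : N) : x * y = x * z -> y = z.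
Proof. by move=> Exy; rewrite -(mulKg x y) Exy mulKg. Qed.

Lemma inv_unique (x y : N) : x * y = 1 -> x = y^-1.
Proof. by move=> Exy; rewrite -(op_e_r N x) -(op_inv_r N y) op_assoc Exy op_e_l. Qed.

Lemma endomorphism_e (f : N -> N) : is_endomorphism N f -> f 1 = 1.
Proof.
move=> f_mul; apply: (mulgI (f 1)).
by rewrite -f_mul !op_e_r.
Qed.

Lemma endomorphism_inv (f : N -> N) (x : N) :
  is_endomorphism N f -> f x^-1 = (f x)^-1.
Proof.
by move=> f_mul; apply: inv_unique; rewrite -f_mul op_inv_l endomorphism_e.
Qed.

Lemma affine_linear_parts_commute {a b : N} {f g P Q : N -> N} :
  is_endomorphism N f -> is_endomorphism N g ->
  (forall x, P x = a * f x) -> (forall x, Q x = b * g x) ->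
  (forall x, P (Q x) = Q (P x)) ->
  forall x, f (g x) = g (f x).
Proof.
move=> f_mul g_mul EP EQ PQ x.
have PQ_expand y : P (Q y) = a * f b * f (g y).
  by rewrite EQ EP f_mul op_assoc.
have QP_expand y : Q (P y) = b * g a * g (f y).
  by rewrite EP EQ g_mul op_assoc.
have translations_eq : a * f b = b * g a.
  have := PQ 1.
  rewrite PQ_expand QP_expand (endomorphism_e g_mul) !(endomorphism_e f_mul).
  by rewrite (endomorphism_e g_mul) !op_e_r.
by apply: (mulgI (a * f b)); rewrite -PQ_expand PQ QP_expand translations_eq.
Qed.

Hypothesis N_abelian : abelian N.

Lemma invMg (x y : N) : (x * y)^-1 = x^-1 * y^-1.
Proof.
symmetry; apply: inv_unique.
by rewrite (N_abelian x) op_assoc mulgK op_inv_l.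
Qed.

Lemma mulgACA (x y z t : N) : x * y * (z * t) = x * z * (y * t).
Proof. by rewrite -!op_assoc (op_assoc N y) (N_abelian y) -op_assoc. Qed.

Lemma endomorphism_mul_inv {f : N -> N} :
  is_endomorphism N f -> is_endomorphism N (fun x => f x * x^-1).
Proof. by move=> f_mul x y; rewrite f_mul invMg mulgACA. Qed.

Lemma mul_inv_commute {f g : N -> N} :
  is_endomorphism N f -> is_endomorphism N g ->
  (forall x, f (g x) = g (f x)) ->
  forall x, g (f x * x^-1) * (f x * x^-1)^-1 = f (g x * x^-1) * (g x * x^-1)^-1.
Proof.
move=> f_mul g_mul fg x.
rewrite g_mul f_mul (endomorphism_inv _ g_mul) (endomorphism_inv _ f_mul) fg.
rewrite !invMg !op_assoc.
by rewrite -(op_assoc N (g (f x))) (N_abelian (g x)^-1) op_assoc.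
Qed.

End GroupLaws.

Section Bracoids.

Context {G H N : Group} (odot : G -> N -> N) (boxdot : N -> H -> N).

Lemma gammaM_endomorphism (g : G) :
  left_skew_bracoid G N odot -> is_endomorphism N (gammaM G N odot g).
Proof. by move=> [_ odot_mul] x y; rewrite /gammaM odot_mul !op_assoc. Qed.

Lemma deltaM_endomorphism (h : H) :
  right_skew_bracoid H N boxdot -> is_endomorphism N (deltaM H N boxdot h).
Proof. by move=> [_ boxdot_mul] x y; rewrite /deltaM boxdot_mul !op_assoc. Qed.

Lemma odot_gammaM (g : G) (x : N) :
  odot g x = op N (odot g (e N)) (gammaM G N odot g x).
Proof. by rewrite /gammaM op_assoc op_inv_r op_e_l. Qed.

Hypothesis N_abelian : abelian N.

Lemma boxdot_deltaM (h : H) (x : N) :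
  boxdot x h = op N (boxdot (e N) h) (deltaM H N boxdot h x).
Proof. by rewrite /deltaM N_abelian mulgK. Qed.

Lemma betaM_deltaM (h : H) (x : N) :
  betaM H N boxdot h x = op N (deltaM H N boxdot h x) (inv N x).
Proof. by rewrite /betaM -op_assoc N_abelian. Qed.

End Bracoids.

Theorem theorem3p3 (G H N : Group) (odot : G -> N -> N) (boxdot : N -> H -> N) :
  two_sided_bracoid G H N odot boxdot ->
  forall (g : G) (h : H) (eta : N),
    is_endomorphism N (alphaM G N odot g) /\
    is_endomorphism N (betaM H N boxdot h) /\
    deltaM H N boxdot h (gammaM G N odot g eta) = gammaM G N odot g (deltaM H N boxdot h eta) /\
    betaM H N boxdot h (alphaM G N odot g eta) = alphaM G N odot g (betaM H N boxdot h eta).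
Proof.
move=> [[left_br [right_br actions_commute]] N_abelian] g h eta.
have gamma_mul := gammaM_endomorphism g left_br.
have delta_mul := deltaM_endomorphism h right_br.
have gamma_delta := affine_linear_parts_commute gamma_mul delta_mul
  (odot_gammaM odot g) (boxdot_deltaM boxdot N_abelian h) (actions_commute g h).
split; [|split; [|split]].
- exact: (endomorphism_mul_inv N_abelian gamma_mul).
- by move=> x y; rewrite !betaM_deltaM //; apply: endomorphism_mul_inv.
- by rewrite gamma_delta.
- rewrite !betaM_deltaM //.
  exact: (mul_inv_commute N_abelian gamma_mul delta_mul gamma_delta eta).
Qed.
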